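(* Let $\mathscr T=(V,\mathcal E)$ be the directed Cartesian product of rooted directed trees $\mathscr T_1,\dots,\mathscr T_d$ and let $S_{\boldsymbol\lambda}$ be a commuting multishift on $\mathscr T$. Then $S_{\boldsymbol\lambda}$ is strongly circular.
   Context: Directed trees: no loops or circuits, connected ignoring orientation, unique parent $\mathsf{par}(v)$ for vertices with incoming edges; rooted: unique parentless vertex $\mathsf{root}$; $\mathsf{Chi}(u)=\{v:(u,v)\in\mathcal E\}$; all leafless. Directed Cartesian product of rooted trees $\mathscr T_j=(V_j,\mathcal E_j)$: $V=V_1\times\dots\times V_d$ (countably infinite), $(v,w)\in\mathcal E$ iff for some $k$, $(v_k,w_k)\in\mathcal E_k$ and $w_j=v_j$ ($j\ne k$). $\mathsf{Chi}_j(v)=\{w:w_j\in\mathsf{Chi}(v_j),w_k=v_k\ (k\ne j)\}$; $\mathsf{par}_j(v)$ replaces $v_j\ne\mathsf{root}_j$ by $\mathsf{par}(v_j)$. Multishift with positive weights $\lambda^{(j)}_v$: $(S_jf)(v)=\lambda^{(j)}_vf(\mathsf{par}_j(v))$ if $v_j\neq\mathsf{root}_j$, else $0$; each $S_j$ bounded on $l^2(V)$. A commuting $d$-tuple $T$ on $\mathcal H$ is circular if for every $\theta\in\mathbb R^d$ there is a unitary $\Gamma_\theta$ with $\Gamma_\theta^*T_j\Gamma_\theta=e^{i\theta_j}T_j$ for all $j$; strongly circular if moreover $\Gamma_\theta$ can be chosen so that $\theta\mapsto\Gamma_\theta h$ is continuous on $\mathbb R^d$ for every $h$ and $\theta\mapsto\Gamma_\theta$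 is a unitary representation of $\mathbb R^d$. *)

From HB Require Import structures.
From mathcomp Require Import all_boot all_order all_algebra.
From mathcomp Require Import all_classical all_reals all_analysis.
From mathcomp Require Import complex.

Set Implicit Arguments.
Unset Strict Implicit.
Unset Printing Implicit Defensive.

Import Order.TTheory GRing.Theory Num.Theory.
Local Open Scope ring_scope.
Local Open Scope classical_set_scope.

Inductive undir_conn (T : Type) (E : T -> T -> Prop) : T -> T -> Prop :=
  | uc_refl x : undir_conn E x x
  | uc_fwd x y z : E x y -> undir_conn E y z -> undir_conn E x z
  | uc_bwd x y z : E y x -> undir_conn E y z -> undir_conn E x z.

Definition has_circuit (T : Type) (E : T -> T -> Prop) : Prop :=
  exists (n : nat) (c : nat -> T),
    (2 <= n)%N /\
    (forall i j, (i < n)%N -> (j < n)%N -> c i = c j -> i = j) /\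
    (forall i, (i.+1 < n)%N -> E (c i) (c i.+1)) /\
    E (c n.-1) (c 0%N).

Definition is_directed_tree (T : Type) (E : T -> T -> Prop) : Prop :=
  [/\ (forall v, ~ E v v),
      ~ has_circuit E,
      (forall u v, undir_conn E u v)
    & (forall u v w, E v u -> E w u -> v = w)].

Definition is_root (T : Type) (E : T -> T -> Prop) (r : T) : Prop :=
  (forall w, ~ E w r) /\ (forall u, (forall w, ~ E w u) -> u = r).

Definition is_rooted_directed_tree (T : Type) (E : T -> T -> Prop) (r : T) :=
  is_directed_tree E /\ is_root E r.

Definition leafless (T : Type) (E : T -> T -> Prop) : Prop :=
  forall u, exists v, E u v.

Definition is_parent_fun (T : Type) (E : T -> T -> Prop) (r : T) (par : T -> T) :=
  forall u, u <> r -> E (par u) u.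

Definition countable_type (T : Type) : Prop :=
  exists f : T -> nat, injective f.

Definition prodV (d : nat) (V : 'I_d -> Type) := forall j : 'I_d, V j.

Definition prod_edge (d : nat) (V : 'I_d -> Type)
    (E : forall j, V j -> V j -> Prop) (v w : prodV V) : Prop :=
  exists k : 'I_d, E k (v k) (w k) /\ (forall j, j <> k -> w j = v j).

Definition par_j (d : nat) (V : 'I_d -> Type) (par : forall j, V j -> V j)
    (j : 'I_d) (v : prodV V) : prodV V :=
  @dfwith _ V v j (par j (v j)).

Section L2.
Variables (R : realType) (X : Type).
Local Notation C := R[i].

(* squared l^2 norm, as an extended real: the (unordered) sum of the
   nonnegative family |f x|^2, i.e. the supremum of its finite partial
   sums (sums over duplicate-free finite lists of points) *)
Definition l2norm2 (f : X -> C) : \bar R :=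
  ereal_sup [set ((\sum_(x <- s) (Normc.normc (f x)) ^+ 2)%:E)%E
            | s in [set s : seq X | forall i j, (i < size s)%N -> (j < size s)%N ->
                       forall x0, nth x0 s i = nth x0 s j -> i = j]].

Definition in_l2 (f : X -> C) : Prop := (l2norm2 f < +oo)%E.

(* a bounded operator on l^2(X) (given as a map on all functions) *)
Definition bounded_on_l2 (A : (X -> C) -> (X -> C)) : Prop :=
  exists M : R, forall f, in_l2 f ->
    in_l2 (A f) /\ (l2norm2 (A f) <= M%:E * l2norm2 f)%E.

Definition linear_on_l2 (A : (X -> C) -> (X -> C)) : Prop :=
  forall (a : C) f g, in_l2 f -> in_l2 g ->
    A (fun x => a * f x + g x) = (fun x => a * A f x + A g x).

(* G is a unitary operator on l^2(X) with inverse (= adjoint) Ginv: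
   a linear isometry of l^2(X) onto itself *)
Definition unitary_on_l2 (G Ginv : (X -> C) -> (X -> C)) : Prop :=
  [/\ linear_on_l2 G,
      forall f, in_l2 f -> in_l2 (G f) /\ in_l2 (Ginv f),
      forall f, in_l2 f -> l2norm2 (G f) = l2norm2 f,
      forall f, in_l2 f -> Ginv (G f) = f
    & forall f, in_l2 f -> G (Ginv f) = f].

End L2.

Definition expi (R : realType) (t : R) : R[i] := Complex (cos t) (sin t).

Definition commuting_tuple (R : realType) (X : Type) (d : nat)
    (T : 'I_d -> (X -> R[i]) -> (X -> R[i])) : Prop :=
  forall j k f, in_l2 f -> T j (T k f) = T k (T j f).

Definition circular_family (R : realType) (X : Type) (d : nat)
    (T : 'I_d -> (X -> R[i]) -> (X -> R[i]))
    (Gamma Gammainv : ('I_d -> R) -> (X -> R[i]) -> (X -> R[i])) : Prop :=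
  forall theta : 'I_d -> R,
    unitary_on_l2 (Gamma theta) (Gammainv theta) /\
    forall j f, in_l2 f ->
      Gammainv theta (T j (Gamma theta f)) = (fun x => expi (theta j) * T j f x).

Definition strongly_circular (R : realType) (X : Type) (d : nat)
    (T : 'I_d -> (X -> R[i]) -> (X -> R[i])) : Prop :=
  exists Gamma Gammainv : ('I_d -> R) -> (X -> R[i]) -> (X -> R[i]),
    [/\ circular_family T Gamma Gammainv,
        (* strong continuity: theta |-> Gamma theta h is continuous R^d -> l^2 *)
        (forall h, in_l2 h -> forall theta0 : 'I_d -> R, forall eps : R, 0 < eps ->
           exists delta : R, 0 < delta /\
             forall theta : 'I_d -> R, (forall j, `|theta j - theta0 j| < delta) ->
               (l2norm2 (fun x => (Gamma theta h x - Gamma theta0 h x)%R) < eps%:E)%E),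
        (forall h, in_l2 h -> Gamma (fun _ => 0) h = h)
      & (forall theta theta' h, in_l2 h ->
           Gamma (fun j => theta j + theta' j) h = Gamma theta (Gamma theta' h))].

Definition multishift (R : realType) (d : nat) (V : 'I_d -> Type)
    (root : forall j, V j) (par : forall j, V j -> V j)
    (lam : 'I_d -> prodV V -> R) (j : 'I_d) (f : prodV V -> R[i]) :
    prodV V -> R[i] :=
  fun v => if `[< v j = root j >] then 0
           else ((lam j v)%:C)%C * f (par_j par j v).

(* Give a vertex v of the product the multi-depth (|v_1|, ..., |v_d|), |v_k| being
   the distance from root_k to v_k, and let Gamma_theta multiply by
   exp(-i sum_k theta_k |v_k|).  These are unitaries forming a representation of
   R^d, and since S_j maps mass at par_j(v) to v, whose depth is one more in the
   j-th coordinate only, Gamma_theta^* S_j Gamma_theta = e^{i theta_j} S_j.  Strong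
   continuity: outside a finite set h has small l^2 tail, and on that finite set
   the phases depend uniformly continuously on theta. *)

From HB Require Import structures.
From mathcomp Require Import all_boot all_order all_algebra.
From mathcomp Require Import all_classical all_reals all_analysis.
From mathcomp Require Import complex.
From mathcomp Require Import ring lra.
Import Order.TTheory GRing.Theory Num.Theory.
Import numFieldNormedType.Exports.
Set Implicit Arguments.
Unset Strict Implicit.
Local Open Scope ring_scope.

Section UnitCircle.
Variable R : realType.
Local Notation C := R[i].

Definition normc2 (z : C) : R := Normc.normc z ^+ 2.

Lemma normc2E a b : normc2 (Complex a b) = a ^+ 2 + b ^+ 2.
Proof. by rewrite /normc2 /= sqr_sqrtr // addr_ge0 ?sqr_ge0. Qed.

Lemma normc2_ge0 z : 0 <= normc2 z. Proof. exact: sqr_ge0. Qed.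

Lemma normc2M z w : normc2 (z * w) = normc2 z * normc2 w.
Proof. by rewrite /normc2 Normc.normcM exprMn. Qed.

Lemma normc2B_le z w : normc2 (z - w) <= 2 * (normc2 z + normc2 w).
Proof.
case: z w => a b [c e]; rewrite /= !normc2E.
have := sqr_ge0 (a + c); have := sqr_ge0 (b + e); nra.
Qed.

Lemma normc2_expi (t : R) : normc2 (expi t) = 1.
Proof. by rewrite /expi normc2E cos2Dsin2. Qed.

Lemma expi0 : expi (0 : R) = 1.
Proof. by rewrite /expi cos0 sin0. Qed.

Lemma expiD (a b : R) : expi (a + b) = expi a * expi b.
Proof. by rewrite /expi cosD sinD /=; congr Complex; ring. Qed.

Lemma expiNK (a : R) (z : C) : expi a * (expi (- a) * z) = z.
Proof. by rewrite mulrA -expiD subrr expi0 mul1r. Qed.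

Lemma expiKN (a : R) (z : C) : expi (- a) * (expi a * z) = z.
Proof. by rewrite mulrA -expiD addNr expi0 mul1r. Qed.

Lemma ler_dist_derive (f df : R -> R) (k a b : R) :
  (forall x : R, is_derive x (1 : R) f (df x)) -> continuous f ->
  (forall x, `|df x| <= k) -> `|f b - f a| <= k * `|b - a|.
Proof.
move=> f' fc df_le.
wlog ab : a b / a <= b.
  move=> hwlog; have [/hwlog//|/ltW/hwlog] := leP a b.
  by rewrite distrC [`|a - b|]distrC.
move: ab; rewrite le_eqVlt => /predU1P[->|ab]; first by rewrite !subrr normr0 mulr0.
have [c _ ->] := MVT ab (fun x _ => f' x) (continuous_subspaceT fc).
by rewrite normrM ler_wpM2r.
Qed.

Lemma normc2_expiB (a b : R) : normc2 (expi a - expi b) <= 2 * (a - b) ^+ 2.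
Proof.
have sqr_le (u v : R) : `|u| <= `|v| -> u ^+ 2 <= v ^+ 2.
  by move=> uv; rewrite -[u ^+ 2]real_normK ?num_real// -[v ^+ 2]real_normK ?num_real// ler_sqr.
have hcos : (cos a - cos b) ^+ 2 <= (a - b) ^+ 2.
  apply: sqr_le; rewrite -[`|a - b|]mul1r.
  apply: (ler_dist_derive (df := fun x => - sin x)) => //; first exact: continuous_cos.
  by move=> x; rewrite normrN sin_max.
have hsin : (sin a - sin b) ^+ 2 <= (a - b) ^+ 2.
  apply: sqr_le; rewrite -[`|a - b|]mul1r.
  apply: (ler_dist_derive (df := cos)) => //; first exact: continuous_sin.
  exact: cos_max.
rewrite /expi /= normc2E; lra.
Qed.

End UnitCircle.

Section MultiplicationOperators.
Variables (R : realType) (X : Type).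
Local Notation C := R[i].
Local Notation Xc := {classic X}.

Definition mulf (p f : X -> C) : X -> C := fun x => p x * f x.

Definition nth_injective (s : seq X) : Prop :=
  forall i j, (i < size s)%N -> (j < size s)%N ->
    forall x0, nth x0 s i = nth x0 s j -> i = j.

Lemma nth_injectiveE (s : seq Xc) : nth_injective s <-> uniq s.
Proof.
case: s => [|x0 s]; first by split => // _ i j; rewrite ltn0.
split => [s_inj|/(uniqP x0) s_inj i j ilt jlt y].
- by apply/(uniqP x0) => i j ilt jlt; apply: s_inj.
- by rewrite (set_nth_default x0 y ilt) (set_nth_default x0 y jlt); apply: s_inj.
Qed.

Lemma sum_le_l2norm2 (h : X -> C) (s : seq X) : nth_injective s ->
  ((\sum_(x <- s) normc2 (h x))%:E <= l2norm2 h)%E.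
Proof. by move=> s_inj; apply: ereal_sup_ubound; exists s. Qed.

Lemma l2norm2_fin (h : X -> C) : in_l2 h ->
  exists N : R, 0 <= N /\ l2norm2 h = N%:E.
Proof.
move=> h2; have nil_inj : nth_injective [::] by move=> i j; rewrite ltn0.
have := sum_le_l2norm2 h nil_inj; rewrite big_nil => h_ge0.
exists (fine (l2norm2 h)); rewrite fine_ge0 // fineK //.
by rewrite ge0_fin_numE.
Qed.

Lemma l2norm2_mulf_unimodular (p f : X -> C) : (forall x, normc2 (p x) = 1) ->
  l2norm2 (mulf p f) = l2norm2 f.
Proof.
move=> p1; rewrite /l2norm2; congr ereal_sup.
suff -> : (fun s : seq X => (\sum_(x <- s) Normc.normc (mulf p f x) ^+ 2)%:E) =
          (fun s : seq X => (\sum_(x <- s) Normc.normc (f x) ^+ 2)%:E) by [].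
apply: funext => s; congr (_%:E); apply: eq_bigr => x _.
by have := normc2M (p x) (f x); rewrite p1 mul1r.
Qed.

Lemma l2_tail (h : X -> C) (e : R) : in_l2 h -> 0 < e ->
  exists s0 : seq Xc, forall s : seq Xc, nth_injective s ->
    \sum_(x <- s | x \notin s0) normc2 (h x) <= e.
Proof.
move=> h2 e0; have [N [N0 hN]] := l2norm2_fin h2.
have : ((N - e)%:E < l2norm2 h)%E by rewrite hN lte_fin ltrBlDr ltrDl.
case/ereal_sup_gt => _ [s0' s0_inj <-]; rewrite lte_fin => s0_big.
pose s0 : seq Xc := s0'; exists s0 => s s_inj.
have uniq_s_s0 : uniq ([seq x <- s | x \notin s0] ++ s0).
  rewrite cat_uniq filter_uniq ?(nth_injectiveE s).1 //= (nth_injectiveE s0).1 //.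
  by rewrite andbT; apply/hasPn => x xs0; rewrite mem_filter xs0.
have := sum_le_l2norm2 h (proj2 (nth_injectiveE _) uniq_s_s0).
rewrite hN lee_fin big_cat /= big_filter; lra.
Qed.

Lemma l2norm2_mulfB_le (h p q : X -> C) (s0 : seq Xc) (c e N : R) :
  (forall x, normc2 (p x) <= 1) -> (forall x, normc2 (q x) <= 1) -> 0 <= c ->
  (forall x : Xc, x \in s0 -> normc2 (p x - q x) <= c) ->
  (forall s : seq Xc, nth_injective s -> \sum_(x <- s | x \notin s0) normc2 (h x) <= e) ->
  l2norm2 h = N%:E ->
  (l2norm2 (fun x => (p x * h x - q x * h x)%R) <= (c * N + 4 * e)%:E)%E.
Proof.
move=> p1 q1 c0 pq_s0 h_tail hN.
apply/ereal_supP => _ [s s_inj <-]; rewrite lee_fin.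
have sum_le_N : \sum_(x <- s) normc2 (h x) <= N.
  by rewrite -lee_fin -hN; apply: sum_le_l2norm2.
have normc2_mulfB x : normc2 (p x * h x - q x * h x) = normc2 (p x - q x) * normc2 (h x).
  by rewrite -mulrBl normc2M.
rewrite (bigID (fun x : Xc => x \in s0)) /=; apply: lerD.
- apply: (@le_trans _ _ (\sum_(x <- s | x \in s0) c * normc2 (h x))).
    apply: ler_sum => x xs0; rewrite -/(normc2 _) normc2_mulfB.
    by apply: ler_wpM2r; [exact: normc2_ge0 | exact: pq_s0].
  rewrite -mulr_sumr ler_wpM2l //; apply: le_trans sum_le_N.
  rewrite [leRHS](bigID (fun x : Xc => x \in s0)) /= lerDl.
  by apply: sumr_ge0 => x _; apply: normc2_ge0.
- apply: (@le_trans _ _ (\sum_(x <- s | x \notin s0) 4 * normc2 (h x))).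
    apply: ler_sum => x _; rewrite -/(normc2 _) normc2_mulfB.
    apply: ler_wpM2r; first exact: normc2_ge0.
    by have := normc2B_le (p x) (q x); have := p1 x; have := q1 x; lra.
  by rewrite -mulr_sumr ler_wpM2l //; apply: h_tail.
Qed.

Lemma l2norm2_mulf_expiB_lt (h : X -> C) (eps : R) : in_l2 h -> 0 < eps ->
  exists (s0 : seq Xc) (eta : R), 0 < eta /\
    forall a b : X -> R, (forall x : Xc, x \in s0 -> `|a x - b x| <= eta) ->
      (l2norm2 (fun x => (expi (a x) * h x - expi (b x) * h x)%R) < eps%:E)%E.
Proof.
move=> h2 eps0; have [N [N0 hN]] := l2norm2_fin h2.
have eps8 : 0 < eps / 8 by rewrite divr_gt0.
have [s0 h_tail] := l2_tail h2 eps8.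
pose eta := Num.min 1 (eps / (8 * (N + 1))).
have N1 : 0 < 8 * (N + 1) by lra.
have eta0 : 0 < eta by rewrite lt_min ltr01 divr_gt0.
have eta1 : eta <= 1 by rewrite ge_min lexx.
have eta_eps : eta * (8 * (N + 1)) <= eps by rewrite -ler_pdivlMr // ge_min lexx orbT.
exists s0, eta; split => // a b ab_s0.
have expi1 (t : X -> R) x : normc2 (expi (t x)) <= 1 by rewrite normc2_expi.
have c0 : 0 <= 2 * eta ^+ 2 by rewrite mulr_ge0 // sqr_ge0.
have expiB_s0 x : x \in s0 -> normc2 (expi (a x) - expi (b x)) <= 2 * eta ^+ 2.
  move=> xs0; apply: (le_trans (normc2_expiB _ _)); rewrite ler_wpM2l //.
  rewrite -[leLHS]real_normK ?num_real // ler_sqr ?nnegrE ?ab_s0 //; exact: ltW.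
apply: le_lt_trans (l2norm2_mulfB_le (expi1 a) (expi1 b) c0 expiB_s0 h_tail hN) _.
rewrite lte_fin; have : 0 <= (1 - eta) * eta * N by rewrite !mulr_ge0 //; lra.
nra.
Qed.

End MultiplicationOperators.

Section GaugeGroup.
Variables (R : realType) (X : Type) (d : nat) (n : 'I_d -> X -> R).
Local Notation C := R[i].

Definition phase (th : 'I_d -> R) (x : X) : R := \sum_(k < d) th k * n k x.

Definition gauge (th : 'I_d -> R) : (X -> C) -> X -> C :=
  mulf (fun x => expi (- phase th x)).

Definition gauge_inv (th : 'I_d -> R) : (X -> C) -> X -> C :=
  mulf (fun x => expi (phase th x)).

Lemma gauge_unitary th : unitary_on_l2 (gauge th) (gauge_inv th).
Proof.
split.
- by move=> a f g _ _; apply: funext => x; rewrite /gauge /mulf mulrDr mulrCA.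
- by move=> f f2; rewrite /in_l2 /gauge /gauge_inv !l2norm2_mulf_unimodular // => x;
    rewrite normc2_expi.
- by move=> f _; rewrite /gauge l2norm2_mulf_unimodular // => x; rewrite normc2_expi.
- by move=> f _; apply: funext => x; rewrite /gauge /gauge_inv /mulf expiNK.
- by move=> f _; apply: funext => x; rewrite /gauge /gauge_inv /mulf expiKN.
Qed.

Lemma gauge0 h : gauge (fun _ => 0) h = h.
Proof.
apply: funext => x; rewrite /gauge /mulf /phase big1 ?oppr0 ?expi0 ?mul1r //.
by move=> k _; rewrite mul0r.
Qed.

Lemma gaugeD th th' h :
  gauge (fun k => th k + th' k) h = gauge th (gauge th' h).
Proof.
apply: funext => x; rewrite /gauge /mulf /phase.
under eq_bigr do rewrite mulrDl.
by rewrite big_split /= opprD expiD mulrA.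
Qed.

Lemma gauge_continuous h : in_l2 h -> forall (th0 : 'I_d -> R) (eps : R), 0 < eps ->
  exists delta : R, 0 < delta /\
    forall th : 'I_d -> R, (forall k, `|th k - th0 k| < delta) ->
      (l2norm2 (fun x => (gauge th h x - gauge th0 h x)%R) < eps%:E)%E.
Proof.
move=> h2 th0 eps eps0.
have [s0 [eta [eta0 small]]] := l2norm2_mulf_expiB_lt h2 eps0.
pose D : R := 1 + \sum_(x <- s0) \sum_(k < d) `|n k x|.
have D_ge : forall x : {classic X}, x \in s0 -> \sum_(k < d) `|n k x| <= D.
  move=> x xs0; rewrite /D (big_rem x xs0) /= addrCA lerDl addr_ge0 //.
  by apply: sumr_ge0 => y _; apply: sumr_ge0.
have D0 : 0 < D by rewrite ltr_pwDl // sumr_ge0 // => x _; apply: sumr_ge0.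
exists (eta / D); split => [|th th_near]; first by rewrite divr_gt0.
apply: small => x xs0.
have -> : - phase th x - - phase th0 x = \sum_(k < d) (th0 k - th k) * n k x.
  by rewrite /phase opprK addrC -sumrB; apply: eq_bigr => k _; rewrite mulrBl.
apply: le_trans (ler_norm_sum _ _ _) _.
apply: (@le_trans _ _ (\sum_(k < d) eta / D * `|n k x|)).
  by apply: ler_sum => k _; rewrite normrM ler_wpM2r // distrC ltW.
by rewrite -mulr_sumr mulrAC ler_pdivrMr // ler_wpM2l ?D_ge // ltW.
Qed.

End GaugeGroup.

Section Depth.
Variables (T : Type) (E : T -> T -> Prop) (r : T) (par : T -> T).

Definition reaches_root (u : T) : Prop := exists n, iter n par u = r.

Lemma reaches_root_ex u : reaches_root u -> exists n, `[< iter n par u = r >].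
Proof. by case=> n un; exists n; apply/asboolP. Qed.

(* Junk value [0] when iterating [par] from [u] never reaches [r]. *)
Definition depth (u : T) : nat :=
  if pselect (reaches_root u) is left u_r then ex_minn (reaches_root_ex u_r) else 0.

Hypothesis par_edge : is_parent_fun E r par.
Hypothesis r_root : is_root E r.
Hypothesis parent_uniq : forall u v w, E v u -> E w u -> v = w.
Hypothesis connected : forall u v, undir_conn E u v.

Lemma edge_par u v : E u v -> v <> r /\ par v = u.
Proof.
move=> uv; have vr : v <> r by move=> vr; subst v; exact: (r_root.1 u).
by split => //; apply: parent_uniq (par_edge vr) uv.
Qed.

Lemma reaches_root_edge u v : E u v -> reaches_root u <-> reaches_root v.
Proof.
move=> /edge_par [vr <-]; split => [[n un]|[[|n] /= vn]] //.
- by exists n.+1; rewrite iterSr.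
- by exists n; rewrite -iterSr.
Qed.

Lemma reaches_root_all u : reaches_root u.
Proof.
suff conn_reach a b : undir_conn E a b -> reaches_root a <-> reaches_root b.
  by apply/(conn_reach u r (connected u r)); exists 0%N.
elim=> [//|x y z xy _ IH|x y z yx _ IH].
- by rewrite (reaches_root_edge xy).
- by rewrite -(reaches_root_edge yx).
Qed.

Lemma depth_par u : u <> r -> depth u = (depth (par u)).+1.
Proof.
move=> ur; rewrite /depth.
case: pselect => [u_r|/(_ (reaches_root_all _))//].
case: pselect => [pu_r|/(_ (reaches_root_all _))//].
case: ex_minnP => [[|m] /asboolP /= um m_min]; first by [].
case: ex_minnP => k /asboolP pk k_min.
apply/eqP; rewrite eqSS eqn_leq k_min /=; last by apply/asboolP; rewrite -iterSr.
by rewrite -ltnS m_min //; apply/asboolP; rewrite iterSr.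
Qed.

End Depth.

Unset Implicit Arguments.

Section MultishiftGauge.
Context {R : realType} {d : nat} {V : 'I_d -> Type}.
Variables (E : forall j : 'I_d, V j -> V j -> Prop) (root : forall j : 'I_d, V j).
Variables (par : forall j : 'I_d, V j -> V j) (lam : 'I_d -> prodV V -> R).
Hypothesis tree : forall j, is_rooted_directed_tree (E j) (root j).
Hypothesis par_edge : forall j, is_parent_fun (E j) (root j) (par j).

Definition depth_coord (k : 'I_d) (v : prodV V) : R := (depth (root k) (par k) (v k))%:R.

Lemma phase_par_j th j v : v j <> root j ->
  phase depth_coord th v = th j + phase depth_coord th (par_j par j v).
Proof.
move=> vj; have [[_ _ conn uniq] r_root] := tree j.
rewrite /phase (bigD1 j) //= [in RHS](bigD1 j) //= addrA; congr (_ + _).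
  by rewrite /depth_coord /par_j dfwithin (depth_par (par_edge j)) // -addn1 natrD; ring.
by apply: eq_bigr => k kj; rewrite /depth_coord /par_j dfwithout // eq_sym.
Qed.

Lemma gauge_multishift th j f :
  gauge_inv depth_coord th (multishift root par lam j (gauge depth_coord th f)) =
  (fun v => expi (th j) * multishift root par lam j f v).
Proof.
apply: funext => v; rewrite /gauge_inv /gauge /mulf /multishift.
case: ifP => [_|/asboolPn vj]; first by rewrite !mulr0.
by rewrite (phase_par_j th j v vj) expiD -mulrA [in X in _ * X]mulrCA expiNK.
Qed.

End MultishiftGauge.

Theorem mainTheorem12 (R : realType) (d : nat) (V : 'I_d -> Type)
    (E : forall j : 'I_d, V j -> V j -> Prop)
    (root : forall j : 'I_d, V j) (par : forall j : 'I_d, V j -> V j)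
    (lam : 'I_d -> prodV V -> R) :
  (0 < d)%N ->
  (forall j, is_rooted_directed_tree (E j) (root j)) ->
  (forall j, leafless (E j)) ->
  (forall j, countable_type (V j)) ->
  (forall j, is_parent_fun (E j) (root j) (par j)) ->
  (forall j v, 0 < lam j v) ->
  (forall j, bounded_on_l2 (multishift root par lam j)) ->
  commuting_tuple (multishift root par lam) ->
  strongly_circular (multishift root par lam).
Proof.
move=> _ tree _ _ par_edge _ _ _.
pose n : 'I_d -> prodV V -> R := depth_coord root par.
exists (gauge n), (gauge_inv n); split.
- move=> th; split; first exact: gauge_unitary.
  by move=> j f _; apply: (gauge_multishift _ _ _ _ tree par_edge).
- exact: gauge_continuous.
- by move=> h _; apply: gauge0.
- by move=> th th' h _; apply: gaugeD.
Qed.
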